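(* Let $h,n,m\in\mathbb{N}$, and let $q_1,\ldots,q_h$ be distinct primes with $q_j\nmid mn$ for all $j$. For each $j$ and each $i\in\{1,\dots,h\}$ let $s_{i,j}\subseteq\{1,\ldots,q_j-1\}$, with $s_{i_1,j}\cap s_{i_2,j}=\emptyset$ for all $i_1\ne i_2$ (the sets $s_{i,j}$ may be empty). Let $S_{i,j}=\sum_{a\in s_{i,j}}e\big(\frac{na}{mq_j}\big)$. Suppose that $s_{i,i}\ne\emptyset$ for every $i$. Then $\det\big([S_{i,j}]_{1\le i,j\le h}\big)\ne0$.
   Context: $e(x):=e^{2\pi i x}$. *)

From HB Require Import structures.
From mathcomp Require Import all_boot all_order all_algebra.
From mathcomp Require Import complex.
From mathcomp Require Import reals trigo.
Set Implicit Arguments. Unset Strict Implicit. Unset Printing Implicit Defensive.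
Import Order.TTheory GRing.Theory Num.Theory.
Local Open Scope ring_scope.
Local Open Scope complex_scope.

Definition e_ (R : realType) (x : R) : R[i] :=
  (cos (2 * pi * x)) +i* (sin (2 * pi * x)).

(* Put M = m q_1 ... q_h. Every entry is a sum of powers of the primitive M-th root of unity
   e(1/M), so the determinant is a rational polynomial evaluated at e(1/M). As Phi_M is
   irreducible over Q, it may as well be evaluated at a primitive M-th root zeta in algC,
   where Galois automorphisms are available.
   There argue by induction on h, expanding along the last column j. With
   eta = zeta^(n M / (m q_j)), a vanishing determinant reads sum_(0 < a < q_j) c_a eta^a = 0,
   where the cofactor sums c_a are fixed by every automorphism fixing the N-th roots of unity,
   N = M / q_j. These automorphisms send eta to eta^(1 + N t) whenever q_j does not divide
   1 + N t; together with c_0 = 0, inverting the discrete Fourier transform in t gives c_a = 0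
   for all a. But by disjointness c_a, for a in s_(j,j), is the diagonal cofactor, which is
   nonzero by induction. *)

From HB Require Import structures.
From mathcomp Require Import all_boot all_order all_algebra.
From mathcomp Require Import complex.
From mathcomp Require Import reals trigo.
From mathcomp Require Import all_field.
From mathcomp Require Import ring lra zify.
Set Implicit Arguments.
Unset Strict Implicit.
Unset Printing Implicit Defensive.
Import Order.TTheory GRing.Theory Num.Theory.
Local Open Scope ring_scope.

Section ExpTwoPiI.
Variable R : realType.
Local Open Scope complex_scope.

Lemma eD (x y : R) : e_ (x + y) = e_ x * e_ y.
Proof. by rewrite /e_ mulrDr cosD sinD /=; congr (_ +i* _); ring. Qed.

Lemma e0 : e_ (0 : R) = 1.
Proof. by rewrite /e_ mulr0 cos0 sin0. Qed.

Lemma e1 : e_ (1 : R) = 1.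
Proof. by rewrite /e_ mulr1 mulr_natl cos2pi sin2pi. Qed.

Lemma eM_natl (x : R) k : e_ (k%:R * x) = e_ x ^+ k.
Proof.
elim: k => [|k IHk]; first by rewrite mul0r e0.
by rewrite -addn1 natrD mulrDl mul1r eD IHk exprD expr1.
Qed.

(* With y = pi x in ]0, pi[, cos (2 y) = cos y ^ 2 - sin y ^ 2 < 1 since sin y > 0. *)
Lemma e_neq1 (x : R) : 0 < x < 1 -> e_ x != 1.
Proof.
move=> /andP[x_gt0 x_lt1]; apply/negP => /eqP[] /eqP.
have -> : 2 * pi * x = pi * x + pi * x by ring.
rewrite cosD => /eqP cos2_eq1 _.
have sin_gt0 : 0 < sin (pi * x).
  apply: sin_gt0_pi; rewrite mulr_gt0 ?pi_gt0 //=.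
  by rewrite -[X in _ < X]mulr1 ltr_pM2l // pi_gt0.
have := cos2Dsin2 (pi * x); nra.
Qed.

Lemma e_inv_prim_root M : (0 < M)%N -> M.-primitive_root (e_ (M%:R^-1 : R)).
Proof.
move=> M_gt0.
have zM : e_ (M%:R^-1 : R) ^+ M = 1 by rewrite -eM_natl mulfV ?pnatr_eq0 -?lt0n // e1.
have [d d_prim dM] := prim_order_exists M_gt0 zM.
suff d_eq_M : d = M by rewrite d_eq_M in d_prim.
have d_gt0 := prim_order_gt0 d_prim.
apply/eqP; rewrite eqn_leq (dvdn_leq M_gt0 dM) /= leqNgt; apply/negP => d_lt_M.
have : 0 < (d%:R * M%:R^-1 : R) < 1.
  by rewrite mulr_gt0 ?invr_gt0 ?ltr0n //= ltr_pdivrMr ?ltr0n // mul1r ltr_nat.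
by move/e_neq1; rewrite eM_natl (prim_expr_order d_prim) eqxx.
Qed.

End ExpTwoPiI.

Lemma dvdn_subnD_ltn q a b : (a < q)%N -> (b < q)%N -> (q %| q - b + a)%N = (a == b).
Proof.
move=> a_lt b_lt; apply/idP/eqP => [/dvdnP [k def_k]|->]; last by rewrite subnK ?dvdnn // ltnW.
case: k def_k => [|[|k]] def_k; [lia|lia|].
have : (2 * q <= k.+2 * q)%N by rewrite leq_mul2r; apply/orP; right.
lia.
Qed.

Section DiscreteFourier.
Variables (F : fieldType) (q : nat) (g : F).
Hypothesis g_prim : q.-primitive_root g.

Lemma sum_prim_root_expM k :
  \sum_(t < q) g ^+ (t * k) = if (q %| k)%N then q%:R else 0.
Proof.
rewrite (prim_order_dvd g_prim).
under eq_bigr => t _ do rewrite mulnC exprM.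
have [->|gk_neq1] := eqVneq (g ^+ k) 1.
  by under eq_bigr => t _ do rewrite expr1n; rewrite sumr_const card_ord.
have : (g ^+ k) ^+ q - 1 = 0.
  by rewrite -exprM mulnC exprM (prim_expr_order g_prim) expr1n subrr.
by rewrite subrX1 => /eqP; rewrite mulf_eq0 subr_eq0 (negbTE gk_neq1) => /eqP.
Qed.

Lemma sum_dft_eq0 (d : 'I_q -> F) :
  (forall a : 'I_q, val a = 0%N -> d a = 0) ->
  \sum_(t < q) \sum_(a < q) d a * g ^+ (t * a) = 0.
Proof.
move=> d0; rewrite exchange_big /=; apply: big1 => a _.
rewrite -mulr_sumr sum_prim_root_expM.
have [/d0 ->|a_gt0] := posnP a; first by rewrite mul0r.
by rewrite gtnNdvd ?mulr0.
Qed.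

Lemma dft_eq0 (d : 'I_q -> F) : q%:R != 0 :> F ->
  (forall t : 'I_q, \sum_(a < q) d a * g ^+ (t * a) = 0) -> forall b, d b = 0.
Proof.
move=> q_neq0 dft0 b; apply: (mulfI q_neq0); rewrite mulr0.
transitivity (\sum_(t < q) g ^+ (t * (q - b)) * \sum_(a < q) d a * g ^+ (t * a)); last first.
  by apply: big1 => t _; rewrite dft0 mulr0.
transitivity (\sum_(a < q) d a * \sum_(t < q) g ^+ (t * (q - b + a))); last first.
  under eq_bigr => a _ do rewrite mulr_sumr.
  rewrite exchange_big /=; apply: eq_bigr => t _.
  rewrite mulr_sumr; apply: eq_bigr => a _.
  by rewrite mulrCA -exprD -mulnDr.
rewrite [RHS](bigD1 b) //= [X in _ + X]big1 => [|a a_neq_b]; last first.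
  by rewrite sum_prim_root_expM dvdn_subnD_ltn // val_eqE (negbTE a_neq_b) mulr0.
by rewrite addr0 sum_prim_root_expM dvdn_subnD_ltn // eqxx mulrC.
Qed.

End DiscreteFourier.

Lemma dvdn_1DM_ord_inj q N (t1 t2 : 'I_q) : coprime N q ->
  (q %| 1 + N * t1)%N -> (q %| 1 + N * t2)%N -> t1 = t2.
Proof.
move=> cNq; wlog le_t12 : t1 t2 / (t1 <= t2)%N => [hwlog q_t1 q_t2|q_t1 q_t2].
  by case: (leqP t1 t2) => [|/ltnW] le; [apply: hwlog | apply/esym/hwlog].
have : (q %| N * (t2 - t1))%N.
  by rewrite mulnBr -(subnDl 1); apply: dvdn_sub.
rewrite Gauss_dvdr 1?coprime_sym // => q_dvd; apply/val_inj/eqP.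
rewrite eqn_leq le_t12 /= leqNgt; apply/negP => lt_t12.
have := dvdn_leq _ q_dvd; rewrite subn_gt0 => /(_ lt_t12); have := ltn_ord t2; lia.
Qed.

(* For algebraic x, this says that x lies in the N-th cyclotomic field. *)
Definition fixed_over_unity_roots (N : nat) (x : algC) :=
  forall u : {rmorphism algC -> algC}, (forall y, y ^+ N = 1 -> u y = y) -> u x = x.

Section UnityRootPowers.
Variables (q N : nat) (eta : algC) (c : 'I_q -> algC).
Hypotheses (eta_unity : eta ^+ (N * q) = 1)
  (c_fixed : forall a, fixed_over_unity_roots N (c a))
  (sum_c : \sum_(a < q) c a * eta ^+ a = 0).

(* The automorphism u sends eta to eta ^+ (1 + N t) and fixes the N-th roots of unity. *)
Lemma twisted_sum_eq0 t : coprime (1 + N * t) q ->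
  \sum_(a < q) c a * eta ^+ a * (eta ^+ N) ^+ (t * a) = 0.
Proof.
move=> co_t.
have co_tNq : coprime (1 + N * t) (N * q).
  by rewrite coprimeMr co_t andbT /coprime gcdnC addnC mulnC gcdnMDl gcdn1.
have [u u_eta] := Qn_aut_exists co_tNq.
have u_fix y : y ^+ N = 1 -> u y = y.
  move=> yN; rewrite u_eta; last by rewrite exprM yN expr1n.
  by rewrite exprD expr1 exprM yN expr1n mulr1.
transitivity (u (\sum_(a < q) c a * eta ^+ a)); last by rewrite sum_c rmorph0.
rewrite rmorph_sum; apply: eq_bigr => a _.
rewrite rmorphM rmorphXn (c_fixed a u_fix) u_eta //.
by rewrite exprD expr1 exprMn -mulrA -!exprM mulnA.
Qed.

Lemma unity_root_powers_free : prime q -> coprime N q ->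
  q.-primitive_root (eta ^+ N) -> (forall a : 'I_q, val a = 0%N -> c a = 0) ->
  forall a, c a = 0.
Proof.
move=> q_prime cNq etaN_prim c0.
pose d a := c a * eta ^+ a.
have d0 (a : 'I_q) : val a = 0%N -> d a = 0 by move/c0; rewrite /d => ->; rewrite mul0r.
have dft0 (t : 'I_q) : \sum_(a < q) d a * (eta ^+ N) ^+ (t * a) = 0.
  have [co_t|] := boolP (coprime (1 + N * t) q); first exact: twisted_sum_eq0.
  (* No automorphism reaches the one t with q | 1 + N t; its transform is the total over
     all t, which vanishes as d 0 = 0, minus the others. *)
  rewrite coprime_sym prime_coprime // negbK => q_t.
  rewrite -[RHS](sum_dft_eq0 etaN_prim d0) [RHS](bigD1 t) //= [X in _ + X]big1 ?addr0 //.
  move=> t' t'_neq_t; apply: twisted_sum_eq0.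
  rewrite coprime_sym prime_coprime //; apply: contra t'_neq_t => q_t'.
  by rewrite (dvdn_1DM_ord_inj cNq q_t' q_t).
have q_neq0 : q%:R != 0 :> algC by rewrite pnatr_eq0 -lt0n prime_gt0.
have Nq_gt0 : (0 < N * q)%N.
  rewrite muln_gt0 (prime_gt0 q_prime) andbT lt0n; apply: contraTneq cNq => ->.
  by rewrite /coprime gcd0n gtn_eqF ?prime_gt1.
have eta_neq0 : eta != 0.
  apply/eqP => eta0; move: eta_unity; rewrite eta0 expr0n gtn_eqF //= => /eqP.
  by rewrite eq_sym oner_eq0.
move=> a; have /eqP := dft_eq0 etaN_prim q_neq0 dft0 a.
by rewrite mulf_eq0 expf_eq0 (negbTE eta_neq0) andbF orbF => /eqP.
Qed.

End UnityRootPowers.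

Lemma expand_det_col_powsum (F : comNzRingType) n p (A : 'M[F]_n) (j : 'I_n)
    (s : 'I_n -> {set 'I_p}) (x : F) :
  (forall i, A i j = \sum_(a in s i) x ^+ a) ->
  \det A = \sum_(a < p) (\sum_(i | a \in s i) cofactor A i j) * x ^+ a.
Proof.
move=> Aj; rewrite (expand_det_col _ j).
under [RHS]eq_bigr => a _ do rewrite mulr_suml big_mkcond /=.
rewrite exchange_big /=; apply: eq_bigr => i _.
rewrite Aj mulr_suml [LHS]big_mkcond /=; apply: eq_bigr => a _.
by case: ifP => _; rewrite ?mul0r // mulrC.
Qed.

Lemma cofactor_fixed (F : comNzRingType) n (u : {rmorphism F -> F}) (A : 'M[F]_n) i j :
  (forall i' j', j' != j -> u (A i' j') = A i' j') -> u (cofactor A i j) = cofactor A i j.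
Proof.
move=> A_fixed; rewrite /cofactor rmorphM rmorph_sign -det_map_mx.
congr (_ * \det _); apply/matrixP => i' j'; rewrite !mxE.
by apply: A_fixed; rewrite eq_sym neq_lift.
Qed.

Lemma coprime_prod_primes (I : finType) (P : pred I) (q : I -> nat) p : prime p ->
  (forall l, P l -> prime (q l) && (q l != p)) -> coprime (\prod_(l | P l) q l) p.
Proof.
move=> p_prime q_primes; apply: (big_ind (coprime^~ p)) => [|x y|l /q_primes/andP[ql ql_neq]].
- exact: coprime1n.
- by rewrite coprimeMl => -> ->.
- by rewrite coprime_sym prime_coprime // dvdn_prime2 // eq_sym.
Qed.

Lemma det_unity_root_powsum_neq0 h m (q : 'I_h -> nat) (eta : 'I_h -> algC)
    (s : forall i j : 'I_h, {set 'I_(q j)}) :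
  (forall j, prime (q j)) -> injective q -> (forall j, coprime m (q j)) ->
  (forall j, eta j ^+ (m * q j) = 1) -> (forall j, (q j).-primitive_root (eta j ^+ m)) ->
  (forall i j (a : 'I_(q j)), a \in s i j -> (0 < a)%N) ->
  (forall j i1 i2, i1 != i2 -> [disjoint s i1 j & s i2 j]) ->
  (forall i, s i i != set0) ->
  \det (\matrix_(i < h, j < h) \sum_(a in s i j) eta j ^+ a) != 0.
Proof.
elim: h q eta s => [|h IH] q eta s q_prime q_inj co_m eta_unity eta_prim s_pos s_disj s_diag.
  by rewrite det_mx00 oner_neq0.
set A := \matrix_(i, j) _; set j0 : 'I_h.+1 := ord_max.
have minor_neq0 : \det (row' j0 (col' j0 A)) != 0.
  have -> : row' j0 (col' j0 A) =
      \matrix_(i, j) \sum_(a in s (lift j0 i) (lift j0 j)) eta (lift j0 j) ^+ a.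
    by apply/matrixP => i j; rewrite !mxE.
  apply: IH => // [i1 i2 /q_inj/lift_inj //|i j a /s_pos //|j i1 i2 i_neq].
  by apply: s_disj; rewrite (inj_eq lift_inj).
set P := (\prod_(l | l != j0) q l)%N; set N := (m * P)%N.
have co_P : coprime P (q j0).
  by apply: coprime_prod_primes => // l l_neq; rewrite q_prime (inj_eq q_inj).
have eta_N l : l != j0 -> eta l ^+ N = 1.
  move=> l_neq; rewrite /N; have /dvdnP [k ->] : (q l %| P)%N.
    by rewrite /P (bigD1 l) //= dvdn_mulr.
  by rewrite mulnCA exprM exprAC eta_unity expr1n.
pose c a := \sum_(i | a \in s i j0) cofactor A i j0.
have c_fixed a : fixed_over_unity_roots N (c a).
  move=> u u_fix; rewrite rmorph_sum; apply: eq_bigr => i _.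
  apply: cofactor_fixed => i' j' j'_neq; rewrite !mxE rmorph_sum.
  by apply: eq_bigr => a' _; rewrite rmorphXn u_fix // eta_N.
have c0 (a : 'I_(q j0)) : val a = 0%N -> c a = 0.
  by move=> a0; apply: big1 => i /s_pos; rewrite a0.
have c_diag a : a \in s j0 j0 -> c a = cofactor A j0 j0.
  move=> a_diag; rewrite /c (bigD1 j0) //= big1 ?addr0 // => i /andP[a_i i_neq].
  by rewrite (disjointFl (s_disj _ _ _ i_neq) a_diag) in a_i.
apply/eqP => detA0.
have sum_c : \sum_(a < q j0) c a * eta j0 ^+ a = 0.
  by rewrite -[RHS]detA0 (@expand_det_col_powsum _ _ _ A j0 (s^~ j0) (eta j0)) // => i; rewrite mxE.
have [a a_diag] := set0Pn _ (s_diag j0).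
have eta_Nq : eta j0 ^+ (N * q j0) = 1 by rewrite /N mulnAC exprM eta_unity expr1n.
have eta_N_prim : (q j0).-primitive_root (eta j0 ^+ N).
  by rewrite /N exprM prim_root_exp_coprime.
have co_N : coprime N (q j0) by rewrite coprimeMl co_m.
have /eqP := unity_root_powers_free eta_Nq c_fixed sum_c (q_prime j0) co_N eta_N_prim c0 a.
by rewrite c_diag // /cofactor mulf_eq0 signr_eq0 (negbTE minor_neq0).
Qed.

Lemma root_Cyclotomic_prim (F : idomainType) M (z : F) :
  M.-primitive_root z -> root (map_poly intr 'Phi_M) z.
Proof.
move=> z_prim; have M_gt0 := prim_order_gt0 z_prim.
have prod_Phi d : (0 < d)%N ->
    \prod_(d' <- divisors d) (map_poly intr 'Phi_d').[z] = z ^+ d - 1.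
  move=> d_gt0; rewrite -horner_prod -rmorph_prod prod_Cyclotomic //.
  by rewrite rmorphB rmorphXn /= map_polyX rmorph1 !hornerE.
have /eqP := prod_Phi M M_gt0; rewrite (prim_expr_order z_prim) subrr.
rewrite prodf_seq_eq0 => /hasP [d d_div /= /eqP Phi_d_z].
have d_dvd : (d %| M)%N by rewrite dvdn_divisors.
have [<-|d_neq_M] := eqVneq d M; first exact/eqP.
have d_gt0 : (0 < d)%N := dvdn_gt0 M_gt0 d_dvd.
have /eqP : z ^+ d - 1 = 0.
  by rewrite -prod_Phi // (big_rem d) ?divisors_id //= Phi_d_z mul0r.
rewrite subr_eq0 -(prim_order_dvd z_prim) => M_dvd_d.
by case/negP: d_neq_M; rewrite eqn_leq (dvdn_leq M_gt0 d_dvd) (dvdn_leq d_gt0 M_dvd_d).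
Qed.

Lemma ratr_Cyclotomic (F : numFieldType) M :
  map_poly (ratr : rat -> F) (map_poly intr 'Phi_M) = map_poly intr 'Phi_M.
Proof. by rewrite -map_poly_comp; apply: eq_map_poly => k /=; rewrite ratr_int. Qed.

Lemma root_ratr_prim_algC M (x : algC) (r : {poly rat}) : M.-primitive_root x ->
  root (map_poly ratr r) x = (map_poly intr 'Phi_M %| r).
Proof.
move=> x_prim; have [p [min_x _] root_x] := minCpolyP x.
rewrite root_x; congr (_ %| _); apply: (@map_inj_poly _ algC ratr (fmorph_inj _) (rmorph0 _)).
by rewrite -min_x (minCpoly_cyclotomic x_prim) -(Cintr_Cyclotomic x_prim) ratr_Cyclotomic.
Qed.

(* gcd(Phi_M, p) vanishes at z, so it has a root x in algC; x is a primitive M-th root, whose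
   minimal polynomial Phi_M thus divides gcd(Phi_M, p). *)
Lemma prim_root_transfer (F : numFieldType) M (z : F) (zeta : algC) (p : {poly rat}) :
  M.-primitive_root z -> M.-primitive_root zeta ->
  root (map_poly ratr p) z -> root (map_poly ratr p) zeta.
Proof.
move=> z_prim zeta_prim pz.
pose Phi : {poly rat} := map_poly intr 'Phi_M; pose g := gcdp Phi p.
have Phi_neq0 : Phi != 0 by apply/monic_neq0/monic_map/Cyclotomic_monic.
have gz : root (map_poly ratr g) z.
  by rewrite gcdp_map root_gcd pz ratr_Cyclotomic root_Cyclotomic_prim.
have /closed_rootP [x gx] : size (map_poly (ratr : rat -> algC) g) != 1%N.
  have := root_size_gt1 _ gz; rewrite !size_map_poly map_poly_eq0 gcdp_eq0 negb_and Phi_neq0.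
  by move/(_ isT)/gtn_eqF ->.
have x_prim : M.-primitive_root x.
  move: gx; rewrite gcdp_map root_gcd ratr_Cyclotomic => /andP[+ _].
  by rewrite (Cintr_Cyclotomic zeta_prim) root_cyclotomic.
rewrite (root_ratr_prim_algC _ zeta_prim); apply: dvdp_trans (dvdp_gcdr Phi p).
by rewrite -(root_ratr_prim_algC _ x_prim).
Qed.

Section PowerSumMatrix.
Variables (h : nat) (q : 'I_h -> nat) (s : forall i j : 'I_h, {set 'I_(q j)}) (k : 'I_h -> nat).

Definition powsum_poly_mx : 'M[{poly rat}]_h := \matrix_(i, j) \sum_(a in s i j) ('X ^+ k j) ^+ a.

Lemma det_powsum_horner (F : numFieldType) (x : F) :
  \det (\matrix_(i, j) \sum_(a in s i j) (x ^+ k j) ^+ a) =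
  (map_poly ratr (\det powsum_poly_mx)).[x].
Proof.
rewrite -[RHS]/((horner_eval x \o map_poly ratr) (\det powsum_poly_mx)) -det_map_mx.
congr (\det _); apply/matrixP => i j; rewrite !mxE rmorph_sum; apply: eq_bigr => a _.
by rewrite !rmorphXn /= map_polyX horner_evalE hornerX.
Qed.

End PowerSumMatrix.

Section Period.
Variables (h m n : nat) (q : 'I_h -> nat).
Hypotheses (m_gt0 : (0 < m)%N) (q_prime : forall j, prime (q j)).

Definition prod_other_q j := (\prod_(l | l != j) q l)%N.
Definition period := (m * \prod_j q j)%N.

Lemma period_gt0 : (0 < period)%N.
Proof. by rewrite muln_gt0 m_gt0 prodn_gt0 // => j; apply: prime_gt0. Qed.

Lemma period_eq j : period = (m * q j * prod_other_q j)%N.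
Proof. by rewrite /period (bigD1 j) //= mulnA. Qed.

Lemma e_period_expr (R : realType) j a :
  e_ ((n * a)%:R / (m * q j)%:R : R) = (e_ (period%:R^-1) ^+ (n * prod_other_q j)) ^+ a.
Proof.
have P_gt0 : (0 < prod_other_q j)%N by rewrite prodn_gt0 // => l; apply: prime_gt0.
rewrite -exprM -eM_natl; congr e_; rewrite (period_eq j) !natrM.
have : (prod_other_q j)%:R != 0 :> R by rewrite pnatr_eq0 -lt0n.
have : (q j)%:R != 0 :> R by rewrite pnatr_eq0 -lt0n prime_gt0.
have : m%:R != 0 :> R by rewrite pnatr_eq0 -lt0n.
by move=> *; field; apply/and3P.
Qed.

Section PrimitiveRoot.
Variables (F : fieldType) (zeta : F).
Hypothesis zeta_prim : period.-primitive_root zeta.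

Lemma unity_root_period j : (zeta ^+ (n * prod_other_q j)) ^+ (m * q j) = 1.
Proof.
rewrite -exprM (_ : (_ * _ = period * n)%N); last by rewrite (period_eq j); lia.
by rewrite exprM (prim_expr_order zeta_prim) expr1n.
Qed.

Lemma prim_root_period j : coprime n (q j) ->
  (q j).-primitive_root ((zeta ^+ (n * prod_other_q j)) ^+ m).
Proof.
move=> co_n; have q_dvd : (q j %| period)%N by rewrite (period_eq j) -mulnA mulnCA dvdn_mulr.
rewrite -exprM (_ : (_ * _ = period %/ q j * n)%N).
  by rewrite exprM prim_root_exp_coprime // dvdn_prim_root.
have -> : period = (q j * (m * prod_other_q j))%N by rewrite (period_eq j); lia.
by rewrite mulKn ?prime_gt0 //; lia.
Qed.

End PrimitiveRoot.
End Period.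

Theorem lemma4p5 (R : realType) (h n m : nat) (q : 'I_h -> nat)
  (q_prime : forall j, prime (q j))
  (q_inj : injective q)
  (q_ndvd : forall j, ~~ (q j %| m * n)%N)
  (s : forall i j : 'I_h, {set 'I_(q j)})
  (s_range : forall (i j : 'I_h) (a : 'I_(q j)), a \in s i j -> (0 < a)%N)
  (s_disj : forall (j i1 i2 : 'I_h), i1 != i2 -> [disjoint s i1 j & s i2 j])
  (s_diag : forall i : 'I_h, s i i != set0) :
  let S := fun i j : 'I_h =>
    \sum_(a in s i j) e_ ((n * a)%:R / (m * q j)%:R : R) in
  \det (\matrix_(i < h, j < h) S i j) != 0.
Proof.
cbv zeta; have [h0|h_gt0] := posnP h.
  by subst h; rewrite det_mx00 oner_neq0.
have m_gt0 : (0 < m)%N.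
  by rewrite lt0n; apply: contraNneq (q_ndvd (Ordinal h_gt0)) => ->; rewrite mul0n dvdn0.
have co_m j : coprime m (q j).
  by rewrite coprime_sym prime_coprime //; apply: contra (q_ndvd j); apply: dvdn_mulr.
have co_n j : coprime n (q j).
  by rewrite coprime_sym prime_coprime //; apply: contra (q_ndvd j); apply: dvdn_mull.
pose k j := (n * prod_other_q q j)%N.
have -> : \matrix_(i, j) \sum_(a in s i j) e_ ((n * a)%:R / (m * q j)%:R) =
    \matrix_(i, j) \sum_(a in s i j) (e_ ((period m q)%:R^-1 : R) ^+ k j) ^+ a.
  by apply/matrixP => i j; rewrite !mxE; apply: eq_bigr => a _; rewrite e_period_expr.
have [zeta zeta_prim] := C_prim_root_exists (period_gt0 m_gt0 q_prime).
have z_prim := e_inv_prim_root R (period_gt0 m_gt0 q_prime).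
rewrite det_powsum_horner -rootE.
apply: (contra (prim_root_transfer (p := \det (powsum_poly_mx s k)) z_prim zeta_prim)).
rewrite rootE -det_powsum_horner.
apply: (det_unity_root_powsum_neq0 (eta := fun j => zeta ^+ k j)) => // j.
  exact: unity_root_period.
exact: prim_root_period.
Qed.
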